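(* Let $\delta_0=(\mathbf a_1,\mathbf a_2,\mathbf a_3)$ be an m-triangle of maximal area among m-triangles with the same moment of inertia, and let $\delta_1,\delta_2$ be degenerate (collinear) but nonzero m-triangles satisfying $\delta_0\times\delta_1=\delta_0\times\delta_2=0$. Then the angle $\psi$ between the lines spanned by $\delta_1$ and $\delta_2$ equals the distance between their shapes $\delta_1^\ast,\delta_2^\ast$ in the shape space $M^\ast\simeq S^2(1/2)$, namely $\psi=\frac12|\theta_2-\theta_1|$, where $\theta_i$ is the longitude of $\delta_i^\ast$ on the equator.
   Context: Masses $m_1,m_2,m_3>0$, $m_1+m_2+m_3=1$; an m-triangle is $(\mathbf a_1,\mathbf a_2,\mathbf a_3)$, $\mathbf a_i\in\mathbb R^3$, $\sum m_i\mathbf a_i=0$, with moment of inertia $I=\sum m_i|\mathbf a_i|^2$. For m-triangles $\mathbf X=(\mathbf a_i)$, $\mathbf Y=(\mathbf b_i)$, $\mathbf X\times\mathbf Y=\sum m_i\mathbf a_i\times\mathbf b_i$ (this vanishing is the zero angular momentum condition for the linear motion from $\mathbf X$ to $\mathbf Y$). The shape space $M^\ast$ consists of oriented m-triangles with $I=1$ modulo rotation; with the kinematic metric (induced from $\sum m_i|d\mathbf a_i|^2$ by zero angular momentum lifts) it is a round sphere of radius $1/2$ whose equator is the set of collinear shapes; $\theta$ is the longitude on it, and the spherical metric is $\frac14(d\varphi^2+\sin^2\varphi\,d\theta^2)$. The shape of a nonzero m-triangle is the shape of its rescaling to $I=1$. *)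

From Stdlib Require Import Reals Lra.
Open Scope R_scope.

Record V3 := mkV3 { vx : R; vy : R; vz : R }.

Definition vadd (u v : V3) : V3 := mkV3 (vx u + vx v) (vy u + vy v) (vz u + vz v).
Definition vscale (c : R) (u : V3) : V3 := mkV3 (c * vx u) (c * vy u) (c * vz u).
Definition vsub (u v : V3) : V3 := vadd u (vscale (-1) v).
Definition vzero : V3 := mkV3 0 0 0.
Definition vdot (u v : V3) : R := vx u * vx v + vy u * vy v + vz u * vz v.
Definition vcross (u v : V3) : V3 :=
  mkV3 (vy u * vz v - vz u * vy v)
       (vz u * vx v - vx u * vz v)
       (vx u * vy v - vy u * vx v).
Definition vnorm (u : V3) : R := sqrt (vdot u u).

Definition masses_ok (m1 m2 m3 : R) : Prop :=
  0 < m1 /\ 0 < m2 /\ 0 < m3 /\ m1 + m2 + m3 = 1.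

Definition tri := (V3 * V3 * V3)%type.
Definition p1 (X : tri) : V3 := fst (fst X).
Definition p2 (X : tri) : V3 := snd (fst X).
Definition p3 (X : tri) : V3 := snd X.

Definition is_mtri (m1 m2 m3 : R) (X : tri) : Prop :=
  vadd (vadd (vscale m1 (p1 X)) (vscale m2 (p2 X))) (vscale m3 (p3 X)) = vzero.

Definition inertia (m1 m2 m3 : R) (X : tri) : R :=
  m1 * vdot (p1 X) (p1 X) + m2 * vdot (p2 X) (p2 X) + m3 * vdot (p3 X) (p3 X).

(** X x Y = sum m_i a_i x b_i (angular momentum of the linear motion X -> Y). *)
Definition mcross (m1 m2 m3 : R) (X Y : tri) : V3 :=
  vadd (vadd (vscale m1 (vcross (p1 X) (p1 Y)))
             (vscale m2 (vcross (p2 X) (p2 Y))))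
       (vscale m3 (vcross (p3 X) (p3 Y))).

Definition area (X : tri) : R :=
  / 2 * vnorm (vcross (vsub (p2 X) (p1 X)) (vsub (p3 X) (p1 X))).

Definition max_area (m1 m2 m3 : R) (X : tri) : Prop :=
  forall Y : tri, is_mtri m1 m2 m3 Y ->
    inertia m1 m2 m3 Y = inertia m1 m2 m3 X -> area Y <= area X.

(** The triangle is degenerate and lies on the line R u (through the
    origin = its center of mass). *)
Definition on_line (u : V3) (X : tri) : Prop :=
  exists t1 t2 t3 : R,
    p1 X = vscale t1 u /\ p2 X = vscale t2 u /\ p3 X = vscale t3 u.

Definition collinear (X : tri) : Prop := exists u : V3, u <> vzero /\ on_line u X.

Definition nonzero_tri (X : tri) : Prop := X <> (vzero, vzero, vzero).

Definition line_angle (u v : V3) : R :=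
  acos (Rabs (vdot u v) / (vnorm u * vnorm v)).

(** Jacobi coordinates (isometric for the kinematic metric):
    xi1 = sqrt(m1 m2/(m1+m2)) (a2 - a1),
    xi2 = sqrt(m3 (m1+m2)) (a3 - (m1 a1 + m2 a2)/(m1+m2)),
    so that I = |xi1|^2 + |xi2|^2. *)
Definition jac1 (m1 m2 m3 : R) (X : tri) : V3 :=
  vscale (sqrt (m1 * m2 / (m1 + m2))) (vsub (p2 X) (p1 X)).
Definition jac2 (m1 m2 m3 : R) (X : tri) : V3 :=
  vscale (sqrt (m3 * (m1 + m2)))
    (vsub (p3 X) (vscale (/ (m1 + m2)) (vadd (vscale m1 (p1 X)) (vscale m2 (p2 X))))).

(** Shape of a nonzero m-triangle, as a point of the unit sphere S^2 in R^3
    (Hopf coordinates, invariant under rotations and rescaling):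
      ( |xi1|^2 - |xi2|^2, 2 xi1.xi2, 2 |xi1 x xi2| ) / I.
    The shape space M* with the kinematic metric is this sphere scaled by
    1/2, i.e. S^2(1/2); the equator (third coordinate 0) is the set of
    collinear shapes. *)
Definition shape (m1 m2 m3 : R) (X : tri) : V3 :=
  let x := jac1 m1 m2 m3 X in
  let y := jac2 m1 m2 m3 X in
  vscale (/ inertia m1 m2 m3 X)
    (mkV3 (vdot x x - vdot y y) (2 * vdot x y) (2 * vnorm (vcross x y))).

Definition shape_dist (m1 m2 m3 : R) (X Y : tri) : R :=
  / 2 * acos (vdot (shape m1 m2 m3 X) (shape m1 m2 m3 Y)).

Definition longitude (m1 m2 m3 : R) (X : tri) (theta : R) : Prop :=
  let s := shape m1 m2 m3 X in
  exists phi : R, 0 <= phi <= PI /\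
    s = mkV3 (sin phi * cos theta) (sin phi * sin theta) (cos phi).

(* In Jacobi coordinates (xi1, xi2) the kinematic structure becomes Euclidean:
   I = |xi1|^2 + |xi2|^2 and X x Y = xi1 X x xi1 Y + xi2 X x xi2 Y.  Since
   I^2 = 16 m1 m2 m3 area^2 + (|xi1|^2 - |xi2|^2)^2 + 4 (xi1.xi2)^2, a triangle
   of maximal area has Jacobi vectors e, f that are orthogonal and of equal
   length.  A collinear triangle on the line R u has Jacobi vectors s u, t u,
   and its shape is the equatorial point whose longitude is twice the polar
   angle of (s, t).  Zero angular momentum with the maximal triangle reads
   (s e + t f) x u = 0, so u is parallel to s e + t f; as e, f is a conformal
   frame, the angle psi between u1 and u2 is the angle between (s1, t1) and
   (s2, t2).  Hence theta2 - theta1 = +-2 psi modulo 2 pi, which is the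
   double-angle identity cos (theta2 - theta1) = 2 cos^2 psi - 1. *)

From Stdlib Require Import Reals Lra Lia ZArith.
Open Scope R_scope.

Lemma vdot_ge0 (u : V3) : 0 <= vdot u u.
Proof. destruct u; unfold vdot; simpl; nra. Qed.

Lemma vdot_eq0 (u : V3) : vdot u u = 0 -> u = vzero.
Proof.
  destruct u as [a b c]; unfold vdot, vzero; simpl; intros H.
  f_equal; nra.
Qed.

Lemma vdot_gt0 (u : V3) : u <> vzero -> 0 < vdot u u.
Proof.
  intros hu; destruct (vdot_ge0 u) as [|h]; [easy|].
  now destruct hu; apply vdot_eq0.
Qed.

Lemma vdot_vscale (a b : R) (u v : V3) : vdot (vscale a u) (vscale b v) = a * b * vdot u v.
Proof. destruct u, v; unfold vdot, vscale; simpl; ring. Qed.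

Lemma vcross_vscale (a b : R) (u v : V3) :
  vcross (vscale a u) (vscale b v) = vscale (a * b) (vcross u v).
Proof. destruct u, v; unfold vcross, vscale; simpl; f_equal; ring. Qed.

Lemma vcross_vscale_same (s t : R) (u : V3) : vcross (vscale s u) (vscale t u) = vzero.
Proof. destruct u; unfold vcross, vscale, vzero; simpl; f_equal; ring. Qed.

Lemma vcross_lagrange (u v : V3) :
  vdot (vcross u v) (vcross u v) = vdot u u * vdot v v - vdot u v * vdot u v.
Proof. destruct u, v; unfold vdot, vcross; simpl; ring. Qed.

Lemma vnorm_vzero : vnorm vzero = 0.
Proof. unfold vnorm, vdot, vzero; simpl; rewrite Rmult_0_l, !Rplus_0_l; exact sqrt_0. Qed.

Lemma vcross_addl_vscale (s t : R) (e f u : V3) :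
  vadd (vcross e (vscale s u)) (vcross f (vscale t u)) =
  vcross (vadd (vscale s e) (vscale t f)) u.
Proof. destruct e, f, u; unfold vcross, vscale, vadd; simpl; f_equal; ring. Qed.

Lemma vcross_vcross_l (w u : V3) :
  vcross (vcross w u) w = vsub (vscale (vdot w w) u) (vscale (vdot w u) w).
Proof. destruct w, u; unfold vcross, vdot, vsub, vadd, vscale; simpl; f_equal; ring. Qed.

Lemma vscale_vscale (a b : R) (u : V3) : vscale a (vscale b u) = vscale (a * b) u.
Proof. destruct u; unfold vscale; simpl; f_equal; ring. Qed.

Lemma vscale_1 (u : V3) : vscale 1 u = u.
Proof. destruct u; unfold vscale; simpl; f_equal; ring. Qed.

Lemma vsub_eq0 (u v : V3) : vsub u v = vzero -> u = v.
Proof.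
  destruct u, v; unfold vsub, vadd, vscale, vzero; simpl; intros H; injection H; intros.
  f_equal; lra.
Qed.

Lemma vcross_eq0_vscale (w u : V3) :
  vcross w u = vzero -> w <> vzero -> exists l, u = vscale l w.
Proof.
  intros H hw; pose proof (vdot_gt0 w hw) as Hw.
  assert (E : vscale (vdot w w) u = vscale (vdot w u) w).
  { apply vsub_eq0; rewrite <- vcross_vcross_l, H.
    destruct w; unfold vcross, vzero; simpl; f_equal; ring. }
  exists (/ vdot w w * vdot w u).
  rewrite <- vscale_vscale, <- E, vscale_vscale, Rinv_l, vscale_1 by lra; reflexivity.
Qed.

Lemma vdot_conformal_frame (e f : V3) (s1 t1 s2 t2 : R) :
  vdot e f = 0 -> vdot e e = vdot f f ->
  vdot (vadd (vscale s1 e) (vscale t1 f)) (vadd (vscale s2 e) (vscale t2 f))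
  = (s1 * s2 + t1 * t2) * vdot e e.
Proof.
  intros hef hee.
  transitivity (s1 * s2 * vdot e e + (s1 * t2 + t1 * s2) * vdot e f + t1 * t2 * vdot f f).
  - destruct e, f; unfold vdot, vscale, vadd; simpl; ring.
  - rewrite hef, <- hee; ring.
Qed.

Lemma cos_period_Z (x : R) (k : Z) : cos (x + 2 * IZR k * PI) = cos x.
Proof.
  destruct (Z.le_gt_cases 0 k) as [hk|hk].
  - rewrite <- (Z2Nat.id k hk), <- INR_IZR_INZ; apply cos_period.
  - replace k with (- Z.of_nat (Z.to_nat (- k)))%Z by lia.
    rewrite opp_IZR, <- INR_IZR_INZ.
    rewrite <- (cos_period (x + 2 * - INR (Z.to_nat (- k)) * PI) (Z.to_nat (- k))).
    f_equal; ring.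
Qed.

Lemma acos_cos_mod (x : R) : exists k : Z, acos (cos x) = Rabs (x + 2 * IZR k * PI).
Proof.
  pose proof PI_RGT_0 as Hpi.
  set (z := (x + PI) / (2 * PI)); set (n := Int_part z).
  destruct (base_Int_part z) as [Hlo Hhi]; fold n in Hlo, Hhi.
  assert (Hz : x + PI = 2 * PI * z) by (unfold z; field; lra).
  assert (Hy : - PI <= x - 2 * IZR n * PI < PI) by (split; nra).
  exists (- n)%Z.
  rewrite <- (cos_period_Z x (- n)), opp_IZR.
  replace (x + 2 * - IZR n * PI) with (x - 2 * IZR n * PI) by ring.
  destruct (Rle_or_lt 0 (x - 2 * IZR n * PI)).
  - rewrite Rabs_pos_eq by lra; apply acos_cos; lra.
  - rewrite Rabs_left, <- cos_neg by lra; apply acos_cos; lra.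
Qed.

Lemma acos_double (c : R) : 0 <= c <= 1 -> acos (2 * c * c - 1) = 2 * acos c.
Proof.
  intros Hc.
  assert (Hh : acos c <= PI / 2).
  { destruct (Rle_or_lt (acos c) (PI / 2)) as [|h]; [easy|].
    pose proof (acos_bound c); pose proof PI_RGT_0.
    pose proof (cos_decreasing_1 (PI / 2) (acos c)) as D.
    rewrite cos_PI2, cos_acos in D by lra; lra. }
  rewrite <- (cos_acos c) at 1 2 by lra.
  rewrite <- cos_2a_cos; apply acos_cos.
  pose proof (acos_bound c); lra.
Qed.

Definition cos2 (u v : V3) : R := vdot u v * vdot u v / (vdot u u * vdot v v).

Lemma cos2_bound (u v : V3) : 0 <= cos2 u v <= 1.
Proof.
  unfold cos2; pose proof (vcross_lagrange u v); pose proof (vdot_ge0 (vcross u v)).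
  pose proof (vdot_ge0 u); pose proof (vdot_ge0 v).
  destruct (Req_dec (vdot u u * vdot v v) 0) as [h|h].
  - rewrite h, Rdiv_0_r; lra.
  - assert (hd : 0 < vdot u u * vdot v v) by nra.
    pose proof (Rinv_0_lt_compat _ hd).
    split; [nra|].
    apply (Rmult_le_reg_r (vdot u u * vdot v v)); [lra|].
    unfold Rdiv; rewrite Rmult_assoc, Rinv_l; lra.
Qed.

Lemma line_angle_double (u v : V3) : u <> vzero -> v <> vzero ->
  2 * line_angle u v = acos (2 * cos2 u v - 1).
Proof.
  intros hu hv; apply vdot_gt0 in hu, hv.
  unfold line_angle, vnorm.
  pose proof (sqrt_lt_R0 _ hu); pose proof (sqrt_lt_R0 _ hv).
  pose proof (sqrt_sqrt _ (Rlt_le _ _ hu)) as Hu.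
  pose proof (sqrt_sqrt _ (Rlt_le _ _ hv)) as Hv.
  set (a := sqrt (vdot u u)) in *; set (b := sqrt (vdot v v)) in *.
  set (c := Rabs (vdot u v) / (a * b)).
  assert (Hc0 : 0 <= c).
  { apply Rmult_le_pos; [apply Rabs_pos|].
    apply Rlt_le, Rinv_0_lt_compat, Rmult_lt_0_compat; assumption. }
  assert (Hcc : c * c = cos2 u v).
  { assert (Habs : Rabs (vdot u v) * Rabs (vdot u v) = vdot u v * vdot u v)
      by (rewrite <- Rabs_mult; apply Rabs_pos_eq; nra).
    unfold c, cos2; rewrite <- Habs, <- Hu, <- Hv; field; lra. }
  pose proof (cos2_bound u v).
  rewrite <- Hcc, <- Rmult_assoc, acos_double; [reflexivity | nra].
Qed.

Lemma cos2_vscale (a b : R) (u v : V3) : a <> 0 -> b <> 0 ->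
  cos2 (vscale a u) (vscale b v) = cos2 u v.
Proof.
  intros ha hb; unfold cos2; rewrite !vdot_vscale.
  destruct (Req_dec (vdot u u * vdot v v) 0) as [h|h].
  - replace (a * a * vdot u u * (b * b * vdot v v))
      with (a * a * (b * b) * (vdot u u * vdot v v)) by ring.
    rewrite h, Rmult_0_r, !Rdiv_0_r; reflexivity.
  - field; repeat split; try assumption; intros E; apply h; nra.
Qed.

Lemma cos2_conformal_frame (e f : V3) (s1 t1 s2 t2 : R) :
  vdot e f = 0 -> vdot e e = vdot f f -> 0 < vdot e e ->
  0 < s1 * s1 + t1 * t1 -> 0 < s2 * s2 + t2 * t2 ->
  cos2 (vadd (vscale s1 e) (vscale t1 f)) (vadd (vscale s2 e) (vscale t2 f))
  = (s1 * s2 + t1 * t2) * (s1 * s2 + t1 * t2) / ((s1 * s1 + t1 * t1) * (s2 * s2 + t2 * t2)).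
Proof.
  intros hef hee hE hN1 hN2; unfold cos2; rewrite !vdot_conformal_frame by assumption.
  field; repeat split; apply Rgt_not_eq; assumption.
Qed.

Definition area_vec (X : tri) : V3 := vcross (vsub (p2 X) (p1 X)) (vsub (p3 X) (p1 X)).

Lemma area_ge0 (X : tri) : 0 <= area X.
Proof.
  unfold area; pose proof (sqrt_pos (vdot (area_vec X) (area_vec X))).
  unfold vnorm, area_vec in *; lra.
Qed.

Lemma area_sqr (X : tri) : area X * area X = / 4 * vdot (area_vec X) (area_vec X).
Proof.
  pose proof (sqrt_sqrt _ (vdot_ge0 (area_vec X))).
  unfold area, vnorm; fold (area_vec X); nra.
Qed.

Section Jacobi.

Variables m1 m2 m3 : R.
Hypothesis hm : masses_ok m1 m2 m3.

Local Notation xi1 := (jac1 m1 m2 m3).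
Local Notation xi2 := (jac2 m1 m2 m3).

Lemma jac1_coef_sqr :
  sqrt (m1 * m2 / (m1 + m2)) * sqrt (m1 * m2 / (m1 + m2)) = m1 * m2 / (m1 + m2).
Proof.
  destruct hm as (H1 & H2 & H3 & H4).
  apply sqrt_sqrt, Rlt_le; unfold Rdiv; apply Rmult_lt_0_compat;
    [nra | apply Rinv_0_lt_compat; lra].
Qed.

Lemma jac2_coef_sqr : sqrt (m3 * (m1 + m2)) * sqrt (m3 * (m1 + m2)) = m3 * (m1 + m2).
Proof. destruct hm as (H1 & H2 & H3 & H4); apply sqrt_sqrt; nra. Qed.

Lemma mtri_p3 (X : tri) : is_mtri m1 m2 m3 X ->
  p3 X = vscale (- / m3) (vadd (vscale m1 (p1 X)) (vscale m2 (p2 X))).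
Proof.
  destruct hm as (H1 & H2 & H3 & H4).
  destruct X as [[[a1 a2 a3] [b1 b2 b3]] [c1 c2 c3]].
  unfold is_mtri, p1, p2, p3, vadd, vscale, vzero; simpl.
  intros H; injection H; intros.
  f_equal; apply (Rmult_eq_reg_l m3); try lra; field_simplify; lra.
Qed.

Lemma mcross_jacobi (X Y : tri) : is_mtri m1 m2 m3 X ->
  mcross m1 m2 m3 X Y = vadd (vcross (xi1 X) (xi1 Y)) (vcross (xi2 X) (xi2 Y)).
Proof.
  intros hX; pose proof hm as (H1 & H2 & H3 & H4).
  unfold jac1, jac2; rewrite !vcross_vscale, jac1_coef_sqr, jac2_coef_sqr.
  unfold mcross; rewrite (mtri_p3 X hX).
  destruct X as [[[a1 a2 a3] [b1 b2 b3]] [c1 c2 c3]].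
  destruct Y as [[[x1 x2 x3] [y1 y2 y3]] [z1 z2 z3]].
  replace m3 with (1 - m1 - m2) by lra.
  unfold vcross, vadd, vscale, vsub, p1, p2, p3; simpl.
  f_equal; field; lra.
Qed.

Lemma inertia_jacobi (X : tri) : is_mtri m1 m2 m3 X ->
  inertia m1 m2 m3 X = vdot (xi1 X) (xi1 X) + vdot (xi2 X) (xi2 X).
Proof.
  intros hX; pose proof hm as (H1 & H2 & H3 & H4).
  unfold jac1, jac2; rewrite !vdot_vscale, jac1_coef_sqr, jac2_coef_sqr.
  unfold inertia; rewrite (mtri_p3 X hX).
  destruct X as [[[a1 a2 a3] [b1 b2 b3]] [c1 c2 c3]].
  replace m3 with (1 - m1 - m2) by lra.
  unfold vdot, vadd, vscale, vsub, p1, p2, p3; simpl.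
  field; lra.
Qed.

Lemma vcross_jacobi_area (X : tri) :
  vdot (vcross (xi1 X) (xi2 X)) (vcross (xi1 X) (xi2 X))
  = 4 * (m1 * m2 * m3) * (area X * area X).
Proof.
  pose proof hm as (H1 & H2 & H3 & H4).
  assert (E : vcross (xi1 X) (xi2 X) =
              vscale (sqrt (m1 * m2 / (m1 + m2)) * sqrt (m3 * (m1 + m2))) (area_vec X)).
  { destruct X as [[[a1 a2 a3] [b1 b2 b3]] [c1 c2 c3]].
    unfold area_vec, jac1, jac2, vcross, vscale, vsub, vadd, p1, p2, p3; simpl.
    f_equal; field; lra. }
  rewrite E, vdot_vscale, area_sqr.
  replace (sqrt (m1 * m2 / (m1 + m2)) * sqrt (m3 * (m1 + m2)) *
           (sqrt (m1 * m2 / (m1 + m2)) * sqrt (m3 * (m1 + m2))))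
    with (sqrt (m1 * m2 / (m1 + m2)) * sqrt (m1 * m2 / (m1 + m2)) *
          (sqrt (m3 * (m1 + m2)) * sqrt (m3 * (m1 + m2)))) by ring.
  rewrite jac1_coef_sqr, jac2_coef_sqr; field; lra.
Qed.

(* [I^2] is the squared norm of the Hopf image
   [(|xi1|^2 - |xi2|^2, 2 xi1.xi2, 2 |xi1 x xi2|)] of the Jacobi pair. *)
Lemma inertia_sqr_area (X : tri) : is_mtri m1 m2 m3 X ->
  inertia m1 m2 m3 X * inertia m1 m2 m3 X
  = 16 * (m1 * m2 * m3) * (area X * area X)
    + (vdot (xi1 X) (xi1 X) - vdot (xi2 X) (xi2 X))
      * (vdot (xi1 X) (xi1 X) - vdot (xi2 X) (xi2 X))
    + 4 * (vdot (xi1 X) (xi2 X) * vdot (xi1 X) (xi2 X)).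
Proof.
  intros hX; rewrite inertia_jacobi by assumption.
  pose proof (vcross_lagrange (xi1 X) (xi2 X)) as L.
  rewrite vcross_jacobi_area in L; nra.
Qed.

(* The witness has orthogonal Jacobi vectors of common length [sqrt (I / 2)]. *)
Lemma exists_mtri_area_eq_inertia (I : R) : 0 <= I ->
  exists Y : tri, is_mtri m1 m2 m3 Y /\ inertia m1 m2 m3 Y = I /\
    16 * (m1 * m2 * m3) * (area Y * area Y) = I * I.
Proof.
  intros HI; pose proof hm as (H1 & H2 & H3 & H4).
  set (M := m1 + m2).
  set (a := sqrt (I * M / (2 * m1 * m2))); set (b := sqrt (I / (2 * m3 * M))).
  assert (Ha : a * a = I * M / (2 * m1 * m2)).
  { apply sqrt_sqrt; unfold M; apply Rmult_le_pos; [nra | apply Rlt_le, Rinv_0_lt_compat; nra]. }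
  assert (Hb : b * b = I / (2 * m3 * M)).
  { apply sqrt_sqrt; unfold M; apply Rmult_le_pos; [nra | apply Rlt_le, Rinv_0_lt_compat; nra]. }
  exists (mkV3 (- m2 * a / M) (- m3 * b) 0, mkV3 (m1 * a / M) (- m3 * b) 0, mkV3 0 (M * b) 0).
  rewrite area_sqr.
  unfold is_mtri, inertia, area_vec, vcross, vdot, vsub, vadd, vscale, vzero, p1, p2, p3;
    simpl; unfold M in *.
  replace m3 with (1 - m1 - m2) in * by lra.
  split; [f_equal; field; lra | split].
  - transitivity (m1 * m2 / (m1 + m2) * (a * a) + (1 - m1 - m2) * (m1 + m2) * (b * b));
      [field | rewrite Ha, Hb; field]; lra.
  - transitivity (4 * (m1 * m2 * (1 - m1 - m2)) * (a * a) * (b * b));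
      [field | rewrite Ha, Hb; field]; lra.
Qed.

Lemma max_area_jacobi_conformal (X : tri) : is_mtri m1 m2 m3 X -> max_area m1 m2 m3 X ->
  vdot (xi1 X) (xi2 X) = 0 /\ vdot (xi1 X) (xi1 X) = vdot (xi2 X) (xi2 X).
Proof.
  intros hX hmax; pose proof hm as (H1 & H2 & H3 & H4).
  assert (HI : 0 <= inertia m1 m2 m3 X).
  { rewrite inertia_jacobi by assumption.
    pose proof (vdot_ge0 (xi1 X)); pose proof (vdot_ge0 (xi2 X)); lra. }
  destruct (exists_mtri_area_eq_inertia _ HI) as (Y & hY & HIY & HAY).
  assert (Hle : area Y * area Y <= area X * area X).
  { pose proof (hmax Y hY HIY); pose proof (area_ge0 Y); nra. }
  pose proof (inertia_sqr_area X hX) as E.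
  assert (Hm : 0 < m1 * m2 * m3) by (apply Rmult_lt_0_compat; nra).
  set (d := vdot (xi1 X) (xi1 X) - vdot (xi2 X) (xi2 X)) in E.
  set (p := vdot (xi1 X) (xi2 X)) in E |- *.
  assert (Hsum : d * d + 4 * (p * p) <= 0).
  { pose proof (Rmult_le_compat_l (16 * (m1 * m2 * m3)) _ _ ltac:(lra) Hle); lra. }
  pose proof (Rle_0_sqr d); pose proof (Rle_0_sqr p); unfold Rsqr in *.
  split; [|unfold d in *]; nra.
Qed.

Lemma inertia_pos (X : tri) : nonzero_tri X -> 0 < inertia m1 m2 m3 X.
Proof.
  intros hX; pose proof hm as (H1 & H2 & H3 & H4).
  destruct X as [[a b] c]; unfold inertia, p1, p2, p3 in *; simpl.
  pose proof (vdot_ge0 a); pose proof (vdot_ge0 b); pose proof (vdot_ge0 c).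
  destruct (Rle_or_lt (m1 * vdot a a + m2 * vdot b b + m3 * vdot c c) 0); [|assumption].
  assert (vdot a a = 0) by nra; assert (vdot b b = 0) by nra; assert (vdot c c = 0) by nra.
  exfalso; apply hX; rewrite (vdot_eq0 a), (vdot_eq0 b), (vdot_eq0 c) by assumption.
  reflexivity.
Qed.

Lemma on_line_jacobi (u : V3) (X : tri) : on_line u X ->
  exists s t, xi1 X = vscale s u /\ xi2 X = vscale t u.
Proof.
  intros (t1 & t2 & t3 & E1 & E2 & E3).
  exists (sqrt (m1 * m2 / (m1 + m2)) * (t2 - t1)),
    (sqrt (m3 * (m1 + m2)) * (t3 - / (m1 + m2) * (m1 * t1 + m2 * t2))).
  unfold jac1, jac2; rewrite E1, E2, E3; destruct u.
  unfold vscale, vsub, vadd; simpl; split; f_equal; ring.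
Qed.

Lemma shape_on_line (X : tri) (u : V3) (s t : R) :
  is_mtri m1 m2 m3 X -> nonzero_tri X -> xi1 X = vscale s u -> xi2 X = vscale t u ->
  0 < s * s + t * t /\
  shape m1 m2 m3 X = mkV3 ((s * s - t * t) / (s * s + t * t)) (2 * s * t / (s * s + t * t)) 0.
Proof.
  intros hX hnz J1 J2.
  pose proof (inertia_pos X hnz) as HP; pose proof (inertia_jacobi X hX) as HI.
  rewrite J1, J2, !vdot_vscale in HI.
  pose proof (vdot_ge0 u).
  assert (HN : 0 < s * s + t * t) by nra.
  split; [assumption|].
  unfold shape; cbv zeta; rewrite HI, J1, J2, !vdot_vscale, vcross_vscale_same, vnorm_vzero.
  unfold vscale; simpl; f_equal; field; nra.
Qed.

Lemma mcross_on_line (X Y : tri) (u : V3) (s t : R) :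
  is_mtri m1 m2 m3 X -> xi1 Y = vscale s u -> xi2 Y = vscale t u ->
  mcross m1 m2 m3 X Y = vcross (vadd (vscale s (xi1 X)) (vscale t (xi2 X))) u.
Proof.
  intros hX J1 J2; rewrite mcross_jacobi, J1, J2 by assumption.
  apply vcross_addl_vscale.
Qed.

Lemma on_line_shape_equator (X : tri) (u : V3) :
  is_mtri m1 m2 m3 X -> nonzero_tri X -> on_line u X -> vz (shape m1 m2 m3 X) = 0.
Proof.
  intros hX hnz hl; destruct (on_line_jacobi u X hl) as (s & t & J1 & J2).
  destruct (shape_on_line X u s t hX hnz J1 J2) as [_ ->]; reflexivity.
Qed.

Section MaxAreaFrame.

Variable X0 : tri.
Hypotheses (h0 : is_mtri m1 m2 m3 X0) (h0nz : nonzero_tri X0) (h0max : max_area m1 m2 m3 X0).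

Local Notation e := (xi1 X0).
Local Notation f := (xi2 X0).

Lemma max_area_jacobi_pos : 0 < vdot e e.
Proof.
  pose proof (inertia_pos X0 h0nz); rewrite inertia_jacobi in * by assumption.
  destruct (max_area_jacobi_conformal X0 h0 h0max); lra.
Qed.

Lemma zero_angmom_on_line (Y : tri) (u : V3) :
  is_mtri m1 m2 m3 Y -> nonzero_tri Y -> u <> vzero -> on_line u Y ->
  mcross m1 m2 m3 X0 Y = vzero ->
  exists s t l, 0 < s * s + t * t /\
    shape m1 m2 m3 Y = mkV3 ((s * s - t * t) / (s * s + t * t)) (2 * s * t / (s * s + t * t)) 0 /\
    l <> 0 /\ u = vscale l (vadd (vscale s e) (vscale t f)).
Proof.
  intros hY hnz hu hl hY0.
  destruct (max_area_jacobi_conformal X0 h0 h0max) as [Hef Hee].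
  destruct (on_line_jacobi u Y hl) as (s & t & J1 & J2).
  destruct (shape_on_line Y u s t hY hnz J1 J2) as [HN S].
  pose proof max_area_jacobi_pos as HE.
  rewrite (mcross_on_line X0 Y u s t h0 J1 J2) in hY0.
  assert (HW : vadd (vscale s e) (vscale t f) <> vzero).
  { intros HW; apply (f_equal (fun w => vdot w w)) in HW.
    rewrite vdot_conformal_frame in HW by assumption.
    replace (vdot vzero vzero) with 0 in HW by (unfold vdot, vzero; simpl; ring).
    nra. }
  destruct (vcross_eq0_vscale _ u hY0 HW) as [l El].
  exists s, t, l; repeat split; try assumption.
  intros ->; apply hu; rewrite El; destruct (vadd _ _); unfold vscale, vzero; simpl; f_equal; ring.
Qed.

Lemma shape_vdot_zero_angmom (Y1 Y2 : tri) (u1 u2 : V3) :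
  is_mtri m1 m2 m3 Y1 -> nonzero_tri Y1 -> u1 <> vzero -> on_line u1 Y1 ->
  is_mtri m1 m2 m3 Y2 -> nonzero_tri Y2 -> u2 <> vzero -> on_line u2 Y2 ->
  mcross m1 m2 m3 X0 Y1 = vzero -> mcross m1 m2 m3 X0 Y2 = vzero ->
  vdot (shape m1 m2 m3 Y1) (shape m1 m2 m3 Y2) = 2 * cos2 u1 u2 - 1.
Proof.
  intros hY1 hnz1 hu1 hl1 hY2 hnz2 hu2 hl2 h01 h02.
  destruct (zero_angmom_on_line Y1 u1 hY1 hnz1 hu1 hl1 h01)
    as (s1 & t1 & l1 & HN1 & S1 & Hl1 & E1).
  destruct (zero_angmom_on_line Y2 u2 hY2 hnz2 hu2 hl2 h02)
    as (s2 & t2 & l2 & HN2 & S2 & Hl2 & E2).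
  destruct (max_area_jacobi_conformal X0 h0 h0max) as [Hef Hee].
  pose proof max_area_jacobi_pos as HE.
  rewrite S1, S2, E1, E2, cos2_vscale, cos2_conformal_frame by assumption.
  unfold vdot; simpl; field; split; apply Rgt_not_eq; assumption.
Qed.

End MaxAreaFrame.
End Jacobi.

Lemma longitude_equator (m1 m2 m3 : R) (X : tri) (theta : R) :
  vz (shape m1 m2 m3 X) = 0 -> longitude m1 m2 m3 X theta ->
  shape m1 m2 m3 X = mkV3 (cos theta) (sin theta) 0.
Proof.
  intros Hz (phi & Hphi & Hs); cbv zeta in Hs; rewrite Hs in Hz |- *; simpl in Hz.
  pose proof (sin2_cos2 phi) as P; unfold Rsqr in P.
  pose proof (sin_ge_0 phi ltac:(lra) ltac:(lra)).
  assert (Hsin : sin phi = 1) by nra.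
  rewrite Hsin, Hz, !Rmult_1_l; reflexivity.
Qed.

Theorem mainTheorem8 (m1 m2 m3 : R) (d0 d1 d2 : tri)
  (hm : masses_ok m1 m2 m3)
  (h0 : is_mtri m1 m2 m3 d0) (h0nz : nonzero_tri d0)
  (h0max : max_area m1 m2 m3 d0)
  (h1 : is_mtri m1 m2 m3 d1) (h1c : collinear d1) (h1nz : nonzero_tri d1)
  (h2 : is_mtri m1 m2 m3 d2) (h2c : collinear d2) (h2nz : nonzero_tri d2)
  (h01 : mcross m1 m2 m3 d0 d1 = vzero)
  (h02 : mcross m1 m2 m3 d0 d2 = vzero) :
  forall (u1 u2 : V3) (theta1 theta2 : R),
    u1 <> vzero -> on_line u1 d1 ->
    u2 <> vzero -> on_line u2 d2 ->
    longitude m1 m2 m3 d1 theta1 -> longitude m1 m2 m3 d2 theta2 ->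
    line_angle u1 u2 = shape_dist m1 m2 m3 d1 d2 /\
    exists k : Z, line_angle u1 u2 = / 2 * Rabs (theta2 - theta1 + 2 * IZR k * PI).
Proof.
  intros u1 u2 theta1 theta2 hu1 hl1 hu2 hl2 hlo1 hlo2.
  pose proof (shape_vdot_zero_angmom m1 m2 m3 hm d0 h0 h0nz h0max d1 d2 u1 u2
                h1 h1nz hu1 hl1 h2 h2nz hu2 hl2 h01 h02) as Hdot.
  assert (Hcos : cos (theta2 - theta1) = 2 * cos2 u1 u2 - 1).
  { rewrite <- Hdot, (longitude_equator m1 m2 m3 d1 theta1),
      (longitude_equator m1 m2 m3 d2 theta2), cos_minus by eauto using on_line_shape_equator.
    unfold vdot; simpl; ring. }
  split.
  - unfold shape_dist; rewrite Hdot, <- line_angle_double by assumption; field.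
  - destruct (acos_cos_mod (theta2 - theta1)) as [k Hk]; exists k.
    rewrite <- Hk, Hcos, <- line_angle_double by assumption; field.
Qed.
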